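(* Let $c_1\ge\dots\ge c_m\ge0$ and $d_1\ge\dots\ge d_m\ge0$ be integers with $(c_1,\dots,c_m)\ne(d_1,\dots,d_m)$, and set $c_0=d_0=+\infty$. Let $\ell=\max\{i: c_i\ne d_i\}$, $f=\max\{i\in\{1,\dots,\ell\}: c_i<d_{i-1}\}$, $f'=\max\{i\in\{1,\dots,\ell\}: d_i<c_{i-1}\}$. Let $(r_1,r_2,\dots)$ and $(s_1,s_2,\dots)$ be the conjugate partitions of $(c_1,\dots,c_m)$ and $(d_1,\dots,d_m)$, $r_0=s_0=m$, $x=\min\{i: r_i\ne s_i\}$, $e=\min\{i\ge x-1: s_{i+1}\ge r_{i+1}\}$ and $e'=\min\{i\ge x-1: r_{i+1}\ge s_{i+1}\}$. Then $e=c_f$ and $e'=d_{f'}$.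
   Context: The conjugate of a finite nonincreasing sequence $(a_1,\dots,a_n)$ of nonnegative integers is $(\bar a_1,\bar a_2,\dots)$ with $\bar a_k=\#\{i: a_i\ge k\}$, $k\ge1$. *)

From mathcomp Require Import all_boot.
Set Implicit Arguments. Unset Strict Implicit. Unset Printing Implicit Defensive.

(* A finite nonincreasing sequence (a_1,...,a_m) is a [seq nat] [a];
   the 1-indexed entry a_i (1 <= i <= m) is [entry a i]. *)
Definition entry (a : seq nat) (i : nat) : nat := nth 0 a i.-1.

(* The entry a_i extended by the convention a_0 = +oo:
   [None] stands for +oo. *)
Definition xentry (a : seq nat) (i : nat) : option nat :=
  if i is 0 then None else Some (entry a i).

Definition xlt (x y : option nat) : bool :=
  match x, y with
  | Some u, Some v => u < v
  | Some _, None => true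
  | None, _ => false
  end.

(* Conjugate: abar_k = #{i : a_i >= k}, for k >= 1.
   Note [conjugate a 0 = size a = m], matching the convention r_0 = m. *)
Definition conjugate (a : seq nat) (k : nat) : nat := count (fun ai => k <= ai) a.

From mathcomp Require Import all_boot zify.
Set Implicit Arguments. Unset Strict Implicit. Unset Printing Implicit Defensive.

(* For nonincreasing sequences, [j <= conjugate a k] iff [k <= a_j], so
   conjugates can be compared by comparing entries.  Writing
   [m0 = min(c_l, d_l)], the conjugates agree up to [m0] and differ at
   [m0 + 1] (one of [c_l], [d_l] is [> m0], the other is not, and past [l]
   the sequences agree); hence [x = m0 + 1].  On [(m0, c_f]] the conjugate
   of [d] stays below that of [c]: if [s_k = j], then [c_(j+1) >= k], using
   [c_(j+1) >= c_f] for [j < f] and [c_(j+1) >= d_j] by the maximality of [f]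
   for [f <= j < l] (and [j >= l] is impossible).  At [c_f + 1] it is no
   longer below, since only the [c_j] with [j < f] exceed [c_f], and those
   [d_j] with [j < f] satisfy [d_j >= d_(f-1) > c_f].  Thus [e = c_f]; the
   claim [e' = d_f'] is the same statement with [c] and [d] exchanged. *)

Lemma geq_trans : transitive geq.
Proof. by move=> n m p /= le_nm le_pn; apply: leq_trans le_pn le_nm. Qed.

Lemma first_index_unique (P : pred nat) lo a b :
  lo <= a -> P a -> (forall i, lo <= i < a -> ~~ P i) ->
  lo <= b -> P b -> (forall i, lo <= i < b -> ~~ P i) ->
  a = b.
Proof.
move=> lo_a Pa min_a lo_b Pb min_b.
case: (ltngtP a b) => // [lt_ab | lt_ba].
- by move: (min_b a); rewrite lo_a lt_ab Pa => /(_ isT).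
- by move: (min_a b); rewrite lo_b lt_ba Pb => /(_ isT).
Qed.

Lemma xlt_xentry_pred a b i : 0 < i ->
  xlt (xentry a i) (xentry b i.-1) = (i == 1) || (entry a i < entry b i.-1).
Proof. by case: i => [|[|i]]. Qed.

Lemma entry_nonincr a i j : sorted geq a -> i <= j -> j <= size a ->
  entry a j <= entry a i.
Proof.
move=> a_sorted le_ij; case: j le_ij => [|j]; first by rewrite leqn0 => /eqP ->.
move=> le_ij le_ja; apply: (sorted_leq_nth geq_trans leqnn 0 a_sorted); rewrite ?inE //; lia.
Qed.

Lemma leq_conjugate a k j : sorted geq a -> 0 < j <= size a ->
  (j <= conjugate a k) = (k <= entry a j).
Proof.
elim: a j => [|y s IH] [|j] sorted_ys //= le_js.
rewrite /conjugate /entry /= in IH *.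
case: (leqP k y) => [le_ky | lt_yk].
  rewrite add1n ltnS; case: j le_js => [|j] le_js //.
  exact: IH j.+1 (path_sorted sorted_ys) _.
have -> : count (fun z => k <= z) s = 0.
  apply/eqP; rewrite -leqn0 leqNgt -has_count; apply/hasPn => z s_z.
  have /allP/(_ z s_z) /= le_zy := order_path_min geq_trans sorted_ys.
  by rewrite -ltnNge (leq_ltn_trans le_zy lt_yk).
have := @entry_nonincr _ 1 j.+1 sorted_ys isT le_js.
rewrite /entry /=; lia.
Qed.

Lemma conjugate_leq a b k : sorted geq a -> sorted geq b -> size a <= size b ->
  (forall j, 0 < j <= size a -> k <= entry a j -> k <= entry b j) ->
  conjugate a k <= conjugate b k.
Proof.
move=> sorted_a sorted_b le_ab dom_ab.
have le_conj_a : conjugate a k <= size a by apply: count_size.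
case conj_a: (conjugate a k) => [|j] //; rewrite conj_a in le_conj_a.
have j_a : 0 < j.+1 <= size a by rewrite le_conj_a.
rewrite leq_conjugate //; last by rewrite (leq_trans le_conj_a le_ab).
by apply: dom_ab => //; rewrite -leq_conjugate // conj_a.
Qed.

Lemma conjugate_lt_entry a b l k : sorted geq a -> sorted geq b ->
  0 < l -> l <= size a -> l <= size b -> entry a l < k <= entry b l ->
  conjugate a k < conjugate b k.
Proof.
move=> sorted_a sorted_b l_gt0 l_a l_b /andP[lt_al le_kb].
have : l <= conjugate b k by rewrite leq_conjugate ?l_gt0.
have : ~~ (l <= conjugate a k) by rewrite leq_conjugate ?l_gt0 -?ltnNge.
lia.
Qed.

Lemma conjugate_le_agree_after a b l k : sorted geq a -> sorted geq b ->
  size a = size b -> l <= size b ->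
  (forall i, l < i <= size a -> entry a i = entry b i) -> k <= entry b l ->
  conjugate a k <= conjugate b k.
Proof.
move=> sorted_a sorted_b size_ab l_b agree le_kb.
apply: conjugate_leq; rewrite ?size_ab // => j /andP[j_gt0 j_a] le_ka.
case: (leqP j l) => [le_jl | lt_lj]; last by rewrite -agree // lt_lj size_ab.
exact: leq_trans le_kb (entry_nonincr sorted_b le_jl l_b).
Qed.

Section FirstCrossing.

Variables (m : nat) (c d : seq nat) (l f : nat).
Hypotheses (size_c : size c = m) (size_d : size d = m).
Hypotheses (sorted_c : sorted geq c) (sorted_d : sorted geq d).
Hypotheses (l_gt0 : 0 < l) (l_le_m : l <= m) (cd_l : entry c l <> entry d l).
Hypothesis cd_agree : forall i, l < i <= m -> entry c i = entry d i.
Hypotheses (f_gt0 : 0 < f) (f_le_l : f <= l).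
Hypothesis f_lt : xlt (xentry c f) (xentry d f.-1).
Hypothesis f_max : forall i, f < i <= l -> ~~ xlt (xentry c i) (xentry d i.-1).

Local Notation m0 := (minn (entry c l) (entry d l)).

Lemma c_f_lt_d_pred : 1 < f -> entry c f < entry d f.-1.
Proof. by move: f_lt; rewrite xlt_xentry_pred //; case: eqP => [->|]. Qed.

Lemma d_pred_le_c_after_f i : f < i <= l -> entry d i.-1 <= entry c i.
Proof.
move=> i_fl; move: (f_max i_fl); rewrite xlt_xentry_pred; last by lia.
by rewrite negb_or -leqNgt => /andP[].
Qed.

Lemma conjugate_eq_le_min k : k <= m0 -> conjugate c k = conjugate d k.
Proof.
move=> le_km0; apply/eqP; rewrite eqn_leq.
apply/andP; split; apply: (conjugate_le_agree_after (l := l)); rewrite ?size_c ?size_d //; try lia.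
by move=> i i_lm; rewrite cd_agree.
Qed.

Lemma conjugate_neq_succ_min : conjugate c m0.+1 != conjugate d m0.+1.
Proof.
have [c_l d_l] : l <= size c /\ l <= size d by rewrite size_c size_d.
case: (ltngtP (entry c l) (entry d l)) => [lt_cd | lt_dc | //].
- by rewrite neq_ltn (conjugate_lt_entry (l := l)) //; lia.
- by rewrite neq_ltn orbC (conjugate_lt_entry (l := l)) //; lia.
Qed.

Lemma first_conjugate_diff x :
  conjugate c x <> conjugate d x -> (forall i, i < x -> conjugate c i = conjugate d i) ->
  x = m0.+1.
Proof.
move=> /eqP neq_x eq_lt_x.
apply: (@first_index_unique (fun i => conjugate c i != conjugate d i) 0) => //.
- by move=> i /andP[_ /eq_lt_x ->]; rewrite eqxx.
- exact: conjugate_neq_succ_min.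
- by move=> i /andP[_ lt_im0]; rewrite conjugate_eq_le_min ?eqxx.
Qed.

Lemma min_le_c_f : m0 <= entry c f.
Proof.
have := entry_nonincr sorted_c f_le_l (_ : l <= size c); rewrite size_c; lia.
Qed.

Lemma conjugate_succ_c_f_le :
  conjugate c (entry c f).+1 <= conjugate d (entry c f).+1.
Proof.
apply: conjugate_leq; rewrite ?size_c ?size_d // => j /andP[j_gt0 j_m] lt_cf_cj.
case: (ltnP j f) => [lt_jf | le_fj].
- have := entry_nonincr sorted_d (_ : j <= f.-1) (_ : f.-1 <= size d).
  have := c_f_lt_d_pred; lia.
- have := entry_nonincr sorted_c le_fj (_ : j <= size c); lia.
Qed.

Lemma conjugate_lt_le_c_f k : m0 < k <= entry c f -> conjugate d k < conjugate c k.
Proof.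
move=> k_range; set j := conjugate d k.
have j_m : j <= m by rewrite -size_d count_size.
have le_k_dj : 0 < j -> k <= entry d j.
  by move=> j_gt0; rewrite -leq_conjugate ?size_d ?j_gt0.
have [lt_jl | le_lj] := ltnP j l; last first.
  have := entry_nonincr sorted_d le_lj (_ : j <= size d).
  have : k <= entry c l.
    case: (ltngtP f l) => [lt_fl | | eq_fl]; [| lia | by rewrite -eq_fl; lia].
    have := d_pred_le_c_after_f (_ : f < l <= l).
    have := entry_nonincr sorted_d (_ : l.-1 <= j) (_ : j <= size d); lia.
  lia.
rewrite leq_conjugate //; last by rewrite size_c; lia.
case: (ltnP j f) => [lt_jf | le_fj].
- have := entry_nonincr sorted_c (_ : j.+1 <= f) (_ : f <= size c); lia.
- have := d_pred_le_c_after_f (_ : f < j.+1 <= l); rewrite succnK; lia.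
Qed.

Lemma first_conjugate_crossing x e :
  conjugate c x <> conjugate d x -> (forall i, i < x -> conjugate c i = conjugate d i) ->
  x.-1 <= e -> conjugate c e.+1 <= conjugate d e.+1 ->
  (forall i, x.-1 <= i < e -> conjugate d i.+1 < conjugate c i.+1) ->
  e = entry c f.
Proof.
move=> neq_x eq_lt_x; rewrite (first_conjugate_diff neq_x eq_lt_x) /= => le_e P_e min_e.
apply: (@first_index_unique (fun i => conjugate c i.+1 <= conjugate d i.+1) m0) => //.
- by move=> i /min_e; rewrite -ltnNge.
- exact: min_le_c_f.
- exact: conjugate_succ_c_f_le.
- by move=> i i_range; rewrite -ltnNge conjugate_lt_le_c_f //; lia.
Qed.

End FirstCrossing.

Theorem lemma4p6 (m : nat) (c d : seq nat) (l f f' x e e' : nat) :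
  size c = m -> size d = m ->
  sorted geq c -> sorted geq d ->
  c <> d ->
  (* l = max {i : c_i <> d_i} *)
  (1 <= l <= m /\ entry c l <> entry d l /\
     forall i, l < i <= m -> entry c i = entry d i) ->
  (* f = max {i in 1..l : c_i < d_(i-1)},  with d_0 = +oo *)
  (1 <= f <= l /\ xlt (xentry c f) (xentry d f.-1) /\
     forall i, f < i <= l -> ~~ xlt (xentry c i) (xentry d i.-1)) ->
  (* f' = max {i in 1..l : d_i < c_(i-1)},  with c_0 = +oo *)
  (1 <= f' <= l /\ xlt (xentry d f') (xentry c f'.-1) /\
     forall i, f' < i <= l -> ~~ xlt (xentry d i) (xentry c i.-1)) ->
  (* r = conjugate c, s = conjugate d, r_0 = s_0 = m;
     x = min {i : r_i <> s_i} *)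
  (conjugate c x <> conjugate d x /\
     forall i, i < x -> conjugate c i = conjugate d i) ->
  (* e = min {i >= x-1 : s_(i+1) >= r_(i+1)} *)
  (x.-1 <= e /\ conjugate c e.+1 <= conjugate d e.+1 /\
     forall i, x.-1 <= i < e -> conjugate d i.+1 < conjugate c i.+1) ->
  (* e' = min {i >= x-1 : r_(i+1) >= s_(i+1)} *)
  (x.-1 <= e' /\ conjugate d e'.+1 <= conjugate c e'.+1 /\
     forall i, x.-1 <= i < e' -> conjugate c i.+1 < conjugate d i.+1) ->
  e = entry c f /\ e' = entry d f'.
Proof.
move=> size_c size_d sorted_c sorted_d _ [/andP[l_gt0 l_le_m] [cd_l cd_agree]]
  [/andP[f_gt0 f_le_l] [f_lt f_max]] [/andP[f'_gt0 f'_le_l] [f'_lt f'_max]]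
  [neq_x eq_lt_x] [le_e [P_e min_e]] [le_e' [P_e' min_e']].
split.
- exact: (first_conjugate_crossing size_c size_d sorted_c sorted_d l_gt0 l_le_m
    cd_l cd_agree f_gt0 f_le_l f_lt f_max neq_x eq_lt_x le_e P_e min_e).
- apply: (first_conjugate_crossing size_d size_c sorted_d sorted_c l_gt0 l_le_m
    _ _ f'_gt0 f'_le_l f'_lt f'_max _ _ le_e' P_e' min_e').
  + by move=> /esym.
  + by move=> i /cd_agree.
  + by move=> /esym.
  + by move=> i /eq_lt_x.
Qed.
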